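(* Let $\mathcal{G}=\langle\mathbb{V},\mathbb{E}\rangle$ and the bijection $e$ be as in the context, let $u\in\mathbb{V}$, and let $\pi$ be an $\mathcal{H}^{(\ast)}$-partition of $\mathcal{P}(\mathcal{G},e)$ in which the gadget $\mathcal{N}_u$ is not well-oriented. Then there exists an $\mathcal{H}^{(\ast)}$-partition $\pi'$ of $\mathcal{P}(\mathcal{G},e)$ such that $|\pi'|\le|\pi|$, $\mathcal{N}_u$ is well-oriented in $\pi'$, and for every $w\in\mathbb{V}$ with $w\ne u$, $\mathcal{N}_w$ is well-oriented in $\pi$ if and only if $\mathcal{N}_w$ is well-oriented in $\pi'$.
   Context: Standing assumption: $\mathcal{G}=\langle\mathbb{V},\mathbb{E}\rangle$ is a finite directed graph with $\mathbb{V}\ne\emptyset$, without self-loops, in which every vertex has in-degree $1$ or out-degree $1$; let $m=|\mathbb{E}|$ and let $e:\mathbb{E}\to\{1,\dots,m\}$ be a bijection. For $v\in\mathbb{V}$ the gadget $\mathcal{N}_v=\langle\mathcal{V}_v,\mathcal{E}_v\rangle$ has vertices $\mathcal{V}_v=\{v_{i,j}:0\le i,j\le m\}$ (distinct for distinct $v$) and arcs $\mathcal{E}_v=\{\langle v_{i,j},v_{i,j+1}\rangle:0\le i\le m,0\le j<m\}\cup\{\langle v_{i,j},v_{i+1,j}\rangle:0\le i<m,0\le j\le m\}$. Let $\mathcal{L}_v=\{\{v_{i,0},\dots,v_{i,m}\}:0\le i\le m\}$ and $\mathcal{R}_v=\{\{v_{0,i},\dots,v_{m,i}\}:0\le i\le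 m\}$. The digraph $\mathcal{P}(\mathcal{G},e)$ has vertex set $\bigcup_{v\in\mathbb{V}}\mathcal{V}_v\cup\mathbb{E}$ (each arc of $\mathcal{G}$ is also a vertex) and arc set $\bigcup_{v\in\mathbb{V}}\mathcal{E}_v\cup\{\langle\langle v,u\rangle,v_{e(\langle v,u\rangle),0}\rangle:\langle v,u\rangle\in\mathbb{E}\}\cup\{\langle\langle v,u\rangle,u_{0,e(\langle v,u\rangle)}\rangle:\langle v,u\rangle\in\mathbb{E}\}$; it is a DAG. For a DAG $G$, a partition $\pi$ of its vertex set is an $\mathcal{H}^{(\ast)}$-partition if every induced subgraph $G[P]$, $P\in\pi$, has a directed Hamiltonian path and the quotient digraph $G/\pi$ (vertex set $\pi$, arc $\langle P,Q\rangle$ for $P\ne Q$ whenever some arc of $G$ goes from $P$ to $Q$) is acyclic. For an $\mathcal{H}^{(\ast)}$-partition $\pi$ of $\mathcal{P}(\mathcal{G},e)$ and $v\in\mathbb{V}$, let $\pi|_{\mathcal{N}_v}=\{P\cap\mathcal{V}_v:P\in\pi,\ P\cap\mathcal{V}_v\ne\emptyset\}$; the gadget $\mathcal{N}_v$ is well-oriented in $\pi$ if $\pi|_{\mathcal{N}_v}=\mathcal{L}_v$ or $\pi|_{\mathcal{N}_v}=\mathcal{R}_v$. *)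

From mathcomp Require Import all_boot.
Set Implicit Arguments. Unset Strict Implicit. Unset Printing Implicit Defensive.

Section PGraph.
Variables (V : finType) (E : rel V).

(* arcs of G, as a finite type (each arc is also a vertex of P(G,e)) *)
Definition edgeT := {p : V * V | E p.1 p.2}.

Definition nedges : nat := #|{: edgeT}|.

(* vertices of P(G,e): gadget vertices v_{i,j} (0 <= i,j <= m) and arcs of G *)
Definition PV := ((V * 'I_(nedges.+1) * 'I_(nedges.+1)) + edgeT)%type.

Definition gv (v : V) (i j : 'I_(nedges.+1)) : PV := inl (v, i, j).

(* arc relation of P(G,e), given the labelling e : E -> {1..m} *)
Definition parc (e : edgeT -> nat) : rel PV := fun x y =>
  match x, y with
  | inl (v, i, j), inl (v', i', j') =>
      (v' == v) &&
      (((nat_of_ord i' == i) && (nat_of_ord j' == j.+1)) ||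
       ((nat_of_ord i' == i.+1) && (nat_of_ord j' == j)))
  | inr a, inl (v, i, j) =>
      [&& v == (val a).1, nat_of_ord i == e a & nat_of_ord j == 0] ||
      [&& v == (val a).2, nat_of_ord i == 0 & nat_of_ord j == e a]
  | _, _ => false
  end.

Definition gadget (v : V) : {set PV} :=
  [set x | if x is inl (w, _, _) then w == v else false].

Definition Lset (v : V) : {set {set PV}} :=
  [set [set gv v i j | j : 'I_(nedges.+1)] | i : 'I_(nedges.+1)].
Definition Rset (v : V) : {set {set PV}} :=
  [set [set gv v j i | j : 'I_(nedges.+1)] | i : 'I_(nedges.+1)].

End PGraph.

Section Hstar.
Variables (T : finType) (r : rel T).

Definition ham_path (P : {set T}) : Prop :=
  exists s : seq T, [/\ uniq s, (forall x, (x \in s) = (x \in P)) & sorted r s].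

Definition qarc (pi : {set {set T}}) : rel {set T} := fun P Q =>
  [&& P \in pi, Q \in pi, P != Q & [exists x in P, exists y in Q, r x y]].

Definition acyclic (s : rel {set T}) : Prop :=
  forall c : seq {set T}, c != [::] -> ~~ cycle s c.

Definition Hstar_partition (pi : {set {set T}}) : Prop :=
  [/\ partition pi [set: T],
      forall P, P \in pi -> ham_path P
    & acyclic (qarc pi)].

Definition restr (pi : {set {set T}}) (A : {set T}) : {set {set T}} :=
  [set P :&: A | P in pi & P :&: A != set0].

End Hstar.

Definition well_oriented (V : finType) (E : rel V) (pi : {set {set PV E}}) (v : V) : bool :=
  (restr pi (gadget E v) == Lset E v) || (restr pi (gadget E v) == Rset E v).

From mathcomp Require Import all_boot zify.
Set Implicit Arguments. Unset Strict Implicit. Unset Printing Implicit Defensive.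

(* Every part of an H*-partition is a chain for the coordinatewise order of a
   gadget (arcs of P(G,e) only go right or down), and it is convex for that
   order because the quotient is acyclic.  Counting along antidiagonals then
   shows that a gadget meeting at most m+1 parts is cut into its m+1 rows or
   its m+1 columns; so if N_u is not well-oriented it meets at least m+2
   parts, all contained in N_u together with its incident arcs.  Choose the
   orientation (rows if u has in-degree 1, columns otherwise) for which at
   most one incident arc does not enter at the head of a line.  The new
   partition consists of the m+1 lines of N_u, each preceded by the arc
   entering its head if that arc shared its old part, a singleton for the
   misaligned arc, and the old parts with N_u and these arcs removed; this
   trades at least m+2 parts for at most m+2.  A rank combining the depth of
   the old part in the old quotient with the line index increases along
   every arc between new parts, so the new quotient is acyclic. *)

Section Partitions.
Variable T : finType.

Lemma partition_imset_block (f : T -> {set T}) :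
  (forall x, x \in f x) -> (forall x y, y \in f x -> f y = f x) ->
  partition [set f x | x : T] [set: T].
Proof.
move=> fx fxy; apply/and3P; split.
- apply/eqP/setP=> y; rewrite in_setT; apply/bigcupP; exists (f y) => //.
  by apply/imsetP; exists y.
- apply/trivIsetP=> A B /imsetP[x _ ->] /imsetP[z _ ->] neq.
  apply/pred0P=> y /=; apply/negbTE/negP=> /andP[/fxy h1 /fxy h2].
  by move: neq; rewrite -h1 -h2 eqxx.
- by apply/imsetP=> -[x _ h]; move: (fx x); rewrite -h inE.
Qed.

Lemma mem_imset_block (f : T -> {set T}) B x :
  (forall x y, y \in f x -> f y = f x) ->
  B \in [set f x | x : T] -> x \in B -> B = f x.
Proof. by move=> fxy /imsetP[z _ ->] /fxy ->. Qed.

Lemma restr_pblock (pi : {set {set T}}) A :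
  partition pi [set: T] -> restr pi A = [set pblock pi y :&: A | y in A].
Proof.
move=> hp; apply/setP=> S; apply/imsetP/imsetP.
- case=> P; rewrite inE => /andP[Pin /set0Pn[y]] yPA ->.
  move: (yPA); rewrite inE => /andP[yP yA].
  by exists y => //; rewrite (def_pblock (partition_trivIset hp) Pin yP).
- case=> y yA ->; exists (pblock pi y) => //.
  rewrite inE pblock_mem ?(cover_partition hp) ?in_setT //=.
  apply/set0Pn; exists y; rewrite inE yA andbT mem_pblock.
  by rewrite (cover_partition hp) in_setT.
Qed.

Variables (r : rel T) (pi : {set {set T}}).
Hypothesis pi_acyclic : acyclic (qarc r pi).

Lemma acyclic_qarc_connect P Q : qarc r pi P Q -> ~ connect (qarc r pi) Q P.
Proof.
move=> hPQ /connectP[p pth lst].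
have := pi_acyclic (c := Q :: p) isT; rewrite /cycle rcons_path pth /= -lst.
by rewrite hPQ.
Qed.

Lemma acyclic_connect_antisym P Q :
  connect (qarc r pi) P Q -> connect (qarc r pi) Q P -> P = Q.
Proof.
move=> hPQ hQP; case: (eqVneq P Q) => // neq.
case/connectP: hPQ => -[|P1 p] /= pth lst; first by rewrite lst eqxx in neq.
case/andP: pth => h1 pth; case: (acyclic_qarc_connect h1).
by apply: connect_trans hQP; rewrite lst; apply/connectP; exists p.
Qed.

Definition depth P := #|[set Q | (Q != P) && connect (qarc r pi) Q P]|.

Lemma depth_qarc_lt P Q : qarc r pi P Q -> depth P < depth Q.
Proof.
move=> hPQ; apply: proper_card; apply/properP; split.
- apply/subsetP=> Q0; rewrite !inE => /andP[n0 c0].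
  have cQ : connect (qarc r pi) Q0 Q by apply: connect_trans c0 (connect1 hPQ).
  rewrite cQ andbT; apply/negP=> /eqP e0; subst Q0.
  exact: (acyclic_qarc_connect hPQ c0).
- exists P; rewrite !inE ?eqxx //= connect1 // andbT.
  by move: hPQ => /and4P[_ _ -> _].
Qed.

End Partitions.

Lemma rank_path_last (U : Type) (s : rel U) (rk : U -> nat) :
  (forall x y, s x y -> rk x < rk y) ->
  forall p x, path s x p -> rk x + size p <= rk (last x p).
Proof.
move=> rk_lt; elim=> [|y p IH] x /=; first by rewrite addn0.
case/andP=> hxy /IH; apply: leq_trans.
by rewrite addnS -addSn leq_add2r rk_lt.
Qed.

Lemma acyclic_of_rank (U : eqType) (s : rel U) (rk : U -> nat) :
  (forall x y, s x y -> rk x < rk y) ->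
  forall c, c != [::] -> ~~ cycle s c.
Proof.
move=> rk_lt [|x c] // _; rewrite /cycle; apply/negP=> /(rank_path_last rk_lt).
by rewrite last_rcons size_rcons addnS ltnNge leq_addr.
Qed.

Section Gadget.
Variables (V : finType) (E : rel V) (e : edgeT E -> nat).
Local Notation m := (nedges E).
Local Notation T := (PV E).
Local Notation r := (parc e).

(* For [o = true] the lines of a gadget are its rows [v_{l,*}], for
   [o = false] its columns [v_{*,l}]; [p] is the position along the line. *)
Definition lcoord (o : bool) (x : T) : nat :=
  if x is inl (_, i, j) then (if o then nat_of_ord i else nat_of_ord j) else 0.
Definition pcoord o x := lcoord (~~ o) x.
Definition ogv (o : bool) (v : V) (i j : 'I_m.+1) : T :=
  if o then gv v i j else gv v j i.
Definition node o v (l p : nat) : T := ogv o v (inord l) (inord p).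
Definition line o v (i : 'I_m.+1) : {set T} := [set ogv o v i j | j : 'I_m.+1].

Lemma lcoord_le o x : lcoord o x <= m.
Proof. by case: x => [[[v i j]]|a] //=; case: o; rewrite -ltnS. Qed.

Lemma pcoord_le o x : pcoord o x <= m.
Proof. exact: lcoord_le. Qed.

Lemma nodeK o v x : x \in gadget E v -> node o v (lcoord o x) (pcoord o x) = x.
Proof.
case: x => [[[w i] j]|a]; rewrite inE //= => /eqP->.
by case: o; rewrite /node /ogv /= !inord_val.
Qed.

Lemma node_gadget o v l p : node o v l p \in gadget E v.
Proof. by rewrite /node /ogv; case: o; rewrite /= inE /=. Qed.

Lemma lcoord_node o v l p : l <= m -> lcoord o (node o v l p) = l.
Proof. by move=> h; rewrite /node /ogv; case: o => /=; rewrite inordK. Qed.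

Lemma pcoord_node o v l p : p <= m -> pcoord o (node o v l p) = p.
Proof. by move=> h; rewrite /node /ogv /pcoord; case: o => /=; rewrite inordK. Qed.

Lemma node_inj o v l p l' p' : l <= m -> p <= m -> l' <= m -> p' <= m ->
  node o v l p = node o v l' p' -> l = l' /\ p = p'.
Proof.
move=> hl hp hl' hp' eq.
have := congr1 (lcoord o) eq; have := congr1 (pcoord o) eq.
by rewrite !lcoord_node // !pcoord_node.
Qed.

Lemma mem_line o v i x : (x \in line o v i) = (x \in gadget E v) && (lcoord o x == i).
Proof.
apply/imsetP/andP => [[j _ ->]|[hx /eqP hl]]; first by case: o; rewrite inE /=.
by exists (inord (pcoord o x)) => //; rewrite -{1}(nodeK o hx) /node hl inord_val.
Qed.

Lemma well_oriented_of_lcoord o v (pi : {set {set T}}) : partition pi [set: T] ->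
  {in gadget E v &, forall y z, (z \in pblock pi y) = (lcoord o z == lcoord o y)} ->
  well_oriented pi v.
Proof.
move=> hp same; rewrite /well_oriented.
suff -> : restr pi (gadget E v) = [set line o v i | i : 'I_m.+1].
  by case: o {same}; rewrite eqxx ?orbT.
rewrite (restr_pblock _ hp); apply/setP=> S; apply/imsetP/imsetP => -[y hy ->].
  exists (inord (lcoord o y)) => //; apply/setP=> z.
  rewrite inE mem_line inordK ?ltnS ?lcoord_le //.
  by case: (boolP (z \in gadget E v)) => hz; rewrite ?andbF ?andbT // same.
exists (node o v y 0); first exact: node_gadget.
apply/setP=> z; rewrite inE mem_line.
case: (boolP (z \in gadget E v)) => hz; rewrite ?andbF ?andbT // same ?node_gadget //.
by rewrite lcoord_node // -ltnS.
Qed.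

Lemma parc_gadget o v x y : x \in gadget E v ->
  r x y = (y \in gadget E v) &&
    (((lcoord o y == lcoord o x) && (pcoord o y == (pcoord o x).+1)) ||
     ((lcoord o y == (lcoord o x).+1) && (pcoord o y == pcoord o x))).
Proof.
case: x => [[[w i] j]|a]; rewrite inE //= => /eqP->.
case: y => [[[w' i'] j']|b]; rewrite ?inE //=.
by case: o => //=; rewrite orbC; congr (_ && (_ || _)); rewrite andbC.
Qed.

Lemma parc_gadget_closed v x y : x \in gadget E v -> r x y -> y \in gadget E v.
Proof. by move=> hx; rewrite (parc_gadget true _ hx) => /andP[]. Qed.

Lemma parc_node_pos o v l p : l <= m -> p < m -> r (node o v l p) (node o v l p.+1).
Proof.
move=> hl hp; rewrite (parc_gadget o _ (node_gadget o v l p)) node_gadget.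
rewrite !lcoord_node // !pcoord_node ?eqxx //; exact: ltnW.
Qed.

Lemma parc_node_line o v l p : l < m -> p <= m -> r (node o v l p) (node o v l.+1 p).
Proof.
move=> hl hp; rewrite (parc_gadget o _ (node_gadget o v l p)) node_gadget.
rewrite !pcoord_node // !lcoord_node ?eqxx ?orbT //; exact: ltnW.
Qed.

Lemma parc_to_arc x a : r x (inr a) = false.
Proof. by case: x => [[[w i] j]|b]. Qed.

Definition aligned o v (a : edgeT E) := if o then (val a).1 == v else (val a).2 == v.

Lemma parc_arc_gadget o v a y : y \in gadget E v ->
  r (inr a) y = [&& aligned o v a, lcoord o y == e a & pcoord o y == 0] ||
                [&& aligned (~~ o) v a, lcoord o y == 0 & pcoord o y == e a].
Proof.
case: y => [[[w i] j]|b]; rewrite inE //= => /eqP->.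
rewrite /aligned /pcoord ![v == _]eq_sym; case: o => /=;
by case: (_ == v); case: (_ == v); case: (_ == e a); case: (_ == e a);
   case: (_ == 0); case: (_ == 0).
Qed.

Lemma aligned_excl o v a : ~~ E v v -> aligned o v a -> ~~ aligned (~~ o) v a.
Proof.
move=> nloop; rewrite /aligned; case: o => /= /eqP h1; apply/negP=> /eqP h2;
by move: nloop (valP a); rewrite ?h1 ?h2 => /negbTE->.
Qed.

Lemma gadget_uniq v w x : x \in gadget E v -> x \in gadget E w -> v = w.
Proof. by case: x => [[[z i] j]|a]; rewrite !inE // => /eqP-> /eqP->. Qed.

Definition isgv (x : T) : bool := if x is inl _ then true else false.

Lemma parc_isgv x y : r x y -> isgv y.
Proof. by case: y => // b; rewrite parc_to_arc. Qed.

Lemma path_isgv x s : path r x s -> all isgv s.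
Proof.
by elim: s x => [|y s IH] x //= /andP[/parc_isgv -> /IH].
Qed.

Definition below (x y : T) : bool :=
  match x, y with
  | inl (v, i, j), inl (v', i', j') => [&& v == v', i <= i' & j <= j']
  | inr a, inr b => a == b
  | inr _, inl _ => true
  | inl _, inr _ => false
  end.

Lemma below_refl : reflexive below.
Proof. by case=> [[[w i] j]|a] /=; rewrite eqxx ?leqnn. Qed.

Lemma below_trans : transitive below.
Proof.
case=> [[[w i] j]|a] [[[w1 i1] j1]|a1] [[[w2 i2] j2]|a2] //=.
- case/and3P=> /eqP-> h1 h2 /and3P[/eqP-> h3 h4].
  by rewrite eqxx (leq_trans h1 h3) (leq_trans h2 h4).
- by move=> /eqP-> /eqP->.
Qed.

Lemma parc_below x y : r x y -> below x y.
Proof.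
case: x => [[[w i] j]|a]; case: y => [[[w1 i1] j1]|a1] //=.
by case/andP=> /eqP-> /orP[] /andP[/eqP-> /eqP->]; rewrite eqxx /= leqnn leqnSn.
Qed.

Lemma below_gadget o v x y : x \in gadget E v -> y \in gadget E v ->
  below x y = (lcoord o x <= lcoord o y) && (pcoord o x <= pcoord o y).
Proof.
case: x => [[[w i] j]|a]; rewrite inE //= => /eqP->.
case: y => [[[w' i'] j']|b]; rewrite inE //= => /eqP->.
by rewrite eqxx /pcoord; case: o => //=; rewrite andbC.
Qed.

Lemma below_node o v l p l' p' : l <= m -> p <= m -> l' <= m -> p' <= m ->
  below (node o v l p) (node o v l' p') = (l <= l') && (p <= p').
Proof.
move=> *; rewrite (below_gadget o (node_gadget o v l p) (node_gadget o v l' p')).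
by rewrite !lcoord_node // !pcoord_node.
Qed.

Lemma below_gadget_closed v x y : x \in gadget E v -> isgv y ->
  below x y || below y x -> y \in gadget E v.
Proof.
case: x => [[[w i] j]|a]; rewrite inE //= => /eqP->.
case: y => [[[w' i'] j']|b] //= _; rewrite inE /=.
by case/orP=> /and3P[/eqP-> _ _].
Qed.

Lemma connect_node o v l p l' p' : l <= l' -> p <= p' -> l' <= m -> p' <= m ->
  connect r (node o v l p) (node o v l' p').
Proof.
move=> hl hp hl' hp'.
have walk_pos k : p + k <= m -> connect r (node o v l p) (node o v l (p + k)).
  elim: k => [|k IH] hk; first by rewrite addn0 connect0.
  apply: connect_trans (IH _) _; first lia.
  by rewrite addnS; apply/connect1/parc_node_pos; lia.
have walk_line k : l + k <= m -> connect r (node o v l p') (node o v (l + k) p').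
  elim: k => [|k IH] hk; first by rewrite addn0 connect0.
  apply: connect_trans (IH _) _; first lia.
  by rewrite addnS; apply/connect1/parc_node_line; lia.
apply: connect_trans (walk_pos (p' - p) _) _; first lia.
by rewrite subnKC // -(subnKC hl); apply: walk_line; lia.
Qed.

Lemma below_connect v x y : x \in gadget E v -> y \in gadget E v -> below x y ->
  connect r x y.
Proof.
move=> hx hy; rewrite (below_gadget true hx hy) => /andP[h1 h2].
by rewrite -(nodeK true hx) -(nodeK true hy); apply: connect_node; rewrite ?lcoord_le.
Qed.

End Gadget.
Arguments node_gadget {V E o v l p}.

Section Realign.
Variables (V : finType) (E : rel V) (e : edgeT E -> nat).
Local Notation m := (nedges E).
Local Notation T := (PV E).
Local Notation r := (parc e).
Local Notation node := (node E).

Variable pi : {set {set T}}.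
Hypothesis Hpi : Hstar_partition r pi.

Lemma partition_pi : partition pi [set: T]. Proof. by case: Hpi. Qed.
Lemma ham_pi P : P \in pi -> ham_path r P. Proof. by case: Hpi => _ + _; apply. Qed.
Lemma acyclic_pi : acyclic (qarc r pi). Proof. by case: Hpi. Qed.

Local Notation pb := (pblock pi).
Local Notation depth := (depth r pi).

Lemma mem_pb x : x \in pb x.
Proof. by rewrite mem_pblock (cover_partition partition_pi) in_setT. Qed.

Lemma pb_in x : pb x \in pi.
Proof. by apply: pblock_mem; rewrite (cover_partition partition_pi) in_setT. Qed.

Lemma pb_eq P x : P \in pi -> x \in P -> pb x = P.
Proof. exact: def_pblock (partition_trivIset partition_pi). Qed.

Lemma pb_same x y : y \in pb x -> pb y = pb x.
Proof. exact: same_pblock (partition_trivIset partition_pi). Qed.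

Lemma pb_below_total P x y : P \in pi -> x \in P -> y \in P -> below x y || below y x.
Proof.
move=> /ham_pi [s [us ms ss]]; rewrite -!ms => xs ys.
have H := sorted_leq_nth (@below_trans _ E) (@below_refl _ E) x (sub_sorted (@parc_below _ _ e) ss).
have xi : index x s \in [pred n | n < size s] by rewrite inE index_mem.
have yi : index y s \in [pred n | n < size s] by rewrite inE index_mem.
case: (leqP (index x s) (index y s)) => h.
  by have := H _ _ xi yi h; rewrite !nth_index // => ->.
by have := H _ _ yi xi (ltnW h); rewrite !nth_index // => ->; rewrite orbT.
Qed.

Lemma incomparable_pb x y : ~~ below x y -> ~~ below y x -> y \notin pb x.
Proof.
move=> h1 h2; apply/negP=> /(pb_below_total (pb_in x) (mem_pb x)).
by rewrite (negbTE h1) (negbTE h2).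
Qed.

(* Arcs of [P(G,e)] have no in-arcs, so they head every Hamiltonian path. *)
Lemma pb_arc_succ P a y : P \in pi -> inr a \in P -> y \in P -> y != inr a ->
  exists2 z, z \in P & r (inr a) z.
Proof.
move=> /ham_pi [[|x0 s] [us ms ss]]; rewrite -!ms //=.
have al := path_isgv ss.
rewrite !inE => /orP[/eqP ax|ain]; last by move/allP: al => /(_ _ ain).
subst x0 => /orP[/eqP->|yin]; first by rewrite eqxx.
case: s us ms ss al yin => [|z s] //= us ms ss al yin _.
by exists z; [rewrite -ms !inE eqxx orbT|case/andP: ss].
Qed.

Lemma qarc_pb x y : r x y -> pb x != pb y -> qarc r pi (pb x) (pb y).
Proof.
move=> hxy neq; rewrite /qarc !pb_in neq /=.
by apply/existsP; exists x; rewrite mem_pb; apply/existsP; exists y; rewrite mem_pb.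
Qed.

Lemma connect_pb x y : r x y -> connect (qarc r pi) (pb x) (pb y).
Proof.
move=> hxy; case: (eqVneq (pb x) (pb y)) => [->|neq]; first exact: connect0.
exact/connect1/qarc_pb.
Qed.

Lemma depth_pb_le x y : r x y -> depth (pb x) <= depth (pb y).
Proof.
move=> hxy; case: (eqVneq (pb x) (pb y)) => [->//|neq].
exact/ltnW/(depth_qarc_lt acyclic_pi)/qarc_pb.
Qed.

Lemma depth_pb_lt x y : r x y -> pb x != pb y -> depth (pb x) < depth (pb y).
Proof. by move=> hxy neq; apply/(depth_qarc_lt acyclic_pi)/qarc_pb. Qed.

Lemma connect_pb_connect x y : connect r x y -> connect (qarc r pi) (pb x) (pb y).
Proof.
case/connectP=> p + ->; elim: p x => [|z p IH] x /=; first by rewrite connect0.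
by case/andP=> /connect_pb hxz /IH; apply: connect_trans.
Qed.

(* Parts are convex, otherwise the quotient would have a cycle. *)
Lemma pb_convex v x y z : x \in gadget E v -> y \in gadget E v -> z \in gadget E v ->
  below x y -> below y z -> z \in pb x -> y \in pb x.
Proof.
move=> hx hy hz h1 h2 /pb_same e1.
suff <- : pb y = pb x by exact: mem_pb.
apply: (acyclic_connect_antisym acyclic_pi).
  by rewrite -e1; apply: connect_pb_connect; exact: below_connect hy hz h2.
by apply: connect_pb_connect; exact: below_connect hx hy h1.
Qed.

Lemma pb_antidiagonal o v x y : x \in gadget E v -> y \in gadget E v -> y \in pb x ->
  lcoord o x + pcoord o x = lcoord o y + pcoord o y -> x = y.
Proof.
move=> hx hy hxy hs.
have := pb_below_total (pb_in x) (mem_pb x) hxy.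
rewrite (below_gadget o hx hy) (below_gadget o hy hx) => h.
have [e1 e2] : lcoord o x = lcoord o y /\ pcoord o x = pcoord o y.
  by case/orP: h => /andP[]; lia.
by rewrite -(nodeK o hx) -(nodeK o hy) e1 e2.
Qed.

(** * Gadgets meeting few parts *)

Variable u : V.
Local Notation G := (gadget E u).

Definition gparts := [set P in pi | P :&: G != set0].

Lemma leq_card_gparts n (g : 'I_n -> T) : (forall k, g k \in G) ->
  (forall k k', g k' \in pb (g k) -> k = k') -> n <= #|gparts|.
Proof.
move=> gG ginj.
have fi : injective (fun k => pb (g k)).
  by move=> k k' /= h; apply: ginj; rewrite h; exact: mem_pb.
rewrite -{1}(card_ord n) -(card_imset _ fi); apply: subset_leq_card.
apply/subsetP=> P /imsetP[k _ ->]; rewrite inE pb_in /=.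
by apply/set0Pn; exists (g k); rewrite inE mem_pb gG.
Qed.

Definition line_part o l :=
  forall y, y \in G -> (y \in pb (node o u l 0)) = (lcoord o y == l).

(* The heads of the lines [0, .., l-1], the antidiagonal from [(l, m)] to
   [(m, l)] and the head of line [l] are [m + 2] nodes in distinct parts. *)
Lemma card_gparts_overflow o l : l <= m -> (forall i, i < l -> line_part o i) ->
  (forall i, l <= i <= m -> node o u i (m + l - i) \notin pb (node o u l 0)) ->
  m.+2 <= #|gparts|.
Proof.
move=> hl lines antidiag.
pose g (k : 'I_m.+2) :=
  if k < l then node o u k 0 else if k <= m then node o u k (m + l - k) else node o u l 0.
have gG k : g k \in G by rewrite /g; case: ifP => _; [|case: ifP => _]; exact: node_gadget.
have lcoord_g (k : 'I_m.+2) : k <= m -> lcoord o (g k) = k.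
  by move=> hk; rewrite /g; case: ifP => _; rewrite ?hk lcoord_node.
have g_sep (k k' : 'I_m.+2) : k <= k' -> g k' \in pb (g k) -> k = k' :> nat.
  move=> hkk h; case: (ltnP k l) => hk.
    have ek : g k = node o u k 0 by rewrite /g hk.
    have := lines _ hk _ (gG k'); rewrite -ek h => /esym/eqP.
    case: (leqP k' m) => hk'; first by rewrite lcoord_g.
    have -> : g k' = node o u l 0 by rewrite /g !ifN //; lia.
    rewrite lcoord_node //; lia.
  have hk' := ltn_ord k'; case: (leqP k m) => hkm; last lia.
  have ek : g k = node o u k (m + l - k) by rewrite /g ifN ?hkm //; lia.
  case: (leqP k' m) h => hk'm h.
    have ek' : g k' = node o u k' (m + l - k') by rewrite /g ifN ?hk'm //; lia.
    rewrite ek ek' in h.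
    have := pb_antidiagonal (o := o) node_gadget node_gadget h.
    rewrite !lcoord_node // !pcoord_node; try lia.
    by move=> /(_ _) /node_inj => -[] //; lia.
  have ek' : g k' = node o u l 0 by rewrite /g !ifN //; lia.
  by have := antidiag k; rewrite hk hkm -ek -ek' (pb_same h) mem_pb => /(_ isT).
apply: leq_card_gparts gG _ => k k' h; apply: val_inj => /=.
case: (leqP k k') => hkk; first exact: g_sep.
by apply/esym/g_sep; [exact: ltnW|rewrite (pb_same h) mem_pb].
Qed.

Lemma lower_right_notin_pb_head o l l' p : l < l' <= m -> 0 < p <= m ->
  node o u l' p \notin pb (node o u l 0).
Proof.
move=> hl hp; apply/negP => hin.
have [g0 gle] := (@node_gadget _ E o u, @below_node _ E o u).
have h1 : node o u l 1 \in pb (node o u l 0).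
  by apply: (pb_convex (g0 _ _) (g0 _ _) (g0 _ _) _ _ hin); rewrite gle //; lia.
have h2 : node o u l.+1 0 \in pb (node o u l 0).
  by apply: (pb_convex (g0 _ _) (g0 _ _) (g0 _ _) _ _ hin); rewrite gle //; lia.
have := incomparable_pb (x := node o u l 1) (y := node o u l.+1 0).
by rewrite !gle ?(pb_same h1) ?h2 //; lia.
Qed.

Lemma first_line_part : #|gparts| <= m.+1 ->
  exists o, node o u 0 m \in pb (node o u 0 0).
Proof.
move=> hc.
have [/existsP[d hd]|/existsPn hn] :=
  boolP [exists d : 'I_m.+1, node true u d (m - d) \in pb (node true u 0 0)]; last first.
  suff : m.+2 <= #|gparts| by rewrite ltnNge hc.
  apply: (card_gparts_overflow (o := true) (leq0n m)) => [//|i /andP[_ hi]].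
  by have := hn (inord i); rewrite inordK // addn0.
have dm := leq_ord d.
have [d0|dpos] := posnP d; first by exists true; rewrite d0 subn0 in hd.
have [md|ltdm] := leqP m d.
  have dm' : nat_of_ord d = m by lia.
  by exists false; rewrite dm' subnn in hd.
by move: hd; rewrite (negbTE (lower_right_notin_pb_head true _ _)) //; lia.
Qed.

Lemma line_tail_pb o l : #|gparts| <= m.+1 -> 0 < l <= m ->
  (forall i, i < l -> line_part o i) -> node o u l m \in pb (node o u l 0).
Proof.
move=> hc /andP[lpos hl] lines; apply/negPn/negP => hn.
suff : m.+2 <= #|gparts| by rewrite ltnNge hc.
apply: (card_gparts_overflow hl lines) => i /andP[hi him].
have [->|neq] := eqVneq i l; first by rewrite addnK.
apply: (lower_right_notin_pb_head o); lia.
Qed.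

Lemma line_part_of_tail o l : l <= m -> (forall i, i < l -> line_part o i) ->
  node o u l m \in pb (node o u l 0) -> line_part o l.
Proof.
move=> hl lines htail y hy.
have [g0 gle] := (@node_gadget _ E o u, @below_node _ E o u).
have [hyl hyp] := (lcoord_le o y, pcoord_le o y).
have below_y k p : k <= m -> p <= m ->
    below (node o u k p) y = (k <= lcoord o y) && (p <= pcoord o y).
  by move=> *; rewrite (below_gadget o (g0 _ _) hy) lcoord_node // pcoord_node.
have y_below k p : k <= m -> p <= m ->
    below y (node o u k p) = (lcoord o y <= k) && (pcoord o y <= p).
  by move=> *; rewrite (below_gadget o hy (g0 _ _)) lcoord_node // pcoord_node.
apply/idP/eqP => [yP|yl]; last first.
  by apply: (pb_convex (g0 _ _) hy (g0 _ _) _ _ htail); rewrite ?below_y ?y_below //; lia.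
have := pb_below_total (pb_in _) htail yP; rewrite below_y // y_below //.
case/orP=> /andP[h1 h2].
- case: (ltnP l (lcoord o y)) => h3; last lia.
  by move: yP; rewrite -(nodeK o hy) (negbTE (lower_right_notin_pb_head o _ _)) //; lia.
- case: (ltnP (lcoord o y) l) => h3; last lia.
  have := lines _ h3 _ hy; rewrite eqxx => /pb_same e1.
  have := lines _ h3 _ (g0 l 0); rewrite lcoord_node // -e1 (pb_same yP) mem_pb.
  by move/esym/eqP; lia.
Qed.

Lemma lines_are_parts o : #|gparts| <= m.+1 ->
  node o u 0 m \in pb (node o u 0 0) -> forall l, l <= m -> line_part o l.
Proof.
move=> hc h0; elim/ltn_ind=> l IH hl.
have lines i : i < l -> line_part o i by move=> hi; apply: IH hi (ltnW (leq_trans hi hl)).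
apply: (line_part_of_tail hl lines).
have [l0|lpos] := posnP l; first by rewrite l0.
by apply: line_tail_pb; rewrite ?lpos.
Qed.

Lemma well_oriented_of_card_gparts : #|gparts| <= m.+1 -> well_oriented pi u.
Proof.
move=> hc; have [o h0] := first_line_part hc.
have lines := lines_are_parts hc h0.
apply: (well_oriented_of_lcoord (o := o) partition_pi) => y z hy hz.
have := lines _ (lcoord_le o y) _ hy; rewrite eqxx => /pb_same ->.
exact: lines (lcoord_le o y) _ hz.
Qed.

(** * The realigned partition *)

Hypothesis E_irrefl : forall v, ~~ E v v.
Hypothesis e_inj : injective e.
Hypothesis e_le : forall a, e a <= m.
Variable o : bool.

(* An arc aligned with [o] enters [N_u] at the head [node o u (e a) 0] of a
   line; it is attached if it shares the part of that head. *)
Definition attached (a : edgeT E) := aligned o u a && (inr a \in pb (node o u (e a) 0)).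
Definition is_misaligned (x : T) := if x is inr a then aligned (~~ o) u a else false.
Definition is_attached (x : T) := if x is inr a then attached a else false.
Definition arc_label (x : T) := if x is inr a then e a else 0.

Definition zone := [set x | [|| x \in G, is_misaligned x | is_attached x]].

Definition line_block l : {set T} :=
  [set x | ((x \in G) && (lcoord o x == l)) || (is_attached x && (arc_label x == l))].

Definition block (x : T) : {set T} :=
  if x \in G then line_block (lcoord o x) else if is_misaligned x then [set x]
  else if is_attached x then line_block (arc_label x) else pb x :\: zone.

Lemma zoneP x : [\/ x \in G, is_misaligned x, is_attached x | x \notin zone].
Proof.
rewrite [x \in zone]inE.
have [hG|_] := boolP (x \in G); first exact: Or41.
have [hb|_] := boolP (is_misaligned x); first exact: Or42.
by have [ha|_] := boolP (is_attached x); [apply: Or43|apply: Or44].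
Qed.

Lemma attached_not_misaligned x : is_attached x -> ~~ is_misaligned x.
Proof. by case: x => // a /andP[/(aligned_excl (E_irrefl u))]. Qed.

Lemma attached_not_gadget x : is_attached x -> x \notin G.
Proof. by case: x => [p|a]; rewrite ?inE. Qed.

Lemma block_gadget x : x \in G -> block x = line_block (lcoord o x).
Proof. by rewrite /block => ->. Qed.

Lemma block_misaligned x : is_misaligned x -> block x = [set x].
Proof. by case: x => [p|a] //= hb; rewrite /block inE /= hb. Qed.

Lemma block_attached x : is_attached x -> block x = line_block (arc_label x).
Proof.
move=> ha; rewrite /block (negbTE (attached_not_gadget ha)).
by rewrite (negbTE (attached_not_misaligned ha)) ha.
Qed.

Lemma block_outside x : x \notin zone -> block x = pb x :\: zone.
Proof.
rewrite inE /block; case: (x \in G) => //=.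
by case: (is_misaligned x) => //=; case: (is_attached x).
Qed.

Lemma block_line_block l y : y \in line_block l -> block y = line_block l.
Proof.
rewrite inE => /orP[/andP[hy /eqP<-]|/andP[ha /eqP<-]].
  exact: block_gadget.
exact: block_attached.
Qed.

Lemma mem_block x : x \in block x.
Proof.
case: (zoneP x) => [hG|hb|ha|xZ].
- by rewrite block_gadget // inE hG eqxx.
- by rewrite block_misaligned // inE.
- by rewrite block_attached // inE ha eqxx orbT.
- by rewrite block_outside // inE xZ mem_pb.
Qed.

Lemma block_same x y : y \in block x -> block y = block x.
Proof.
case: (zoneP x) => [hG|hb|ha|xZ].
- by rewrite (block_gadget hG); apply: block_line_block.
- by rewrite (block_misaligned hb) => /set1P->; rewrite block_misaligned.
- by rewrite (block_attached ha); apply: block_line_block.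
rewrite (block_outside xZ) inE => /andP[yZ yP].
by rewrite (block_outside yZ) (pb_same yP).
Qed.

(* A part meeting [N_u] stays inside [N_u] apart from a leading arc, which
   enters [N_u] and is therefore misaligned or attached. *)
Lemma zone_of_part P g y : P \in pi -> g \in P -> g \in G -> y \in P -> y \in zone.
Proof.
move=> hP hg gG hy; rewrite inE.
case: y hy => [p|a] hy.
  by rewrite (below_gadget_closed gG _ (pb_below_total hP hg hy)).
have gn : g != inr a by apply/eqP => eg; move: gG; rewrite eg inE.
have [z zP hz] := pb_arc_succ hP hy hg gn.
have zG : z \in G := below_gadget_closed gG (parc_isgv hz) (pb_below_total hP hg zP).
move: hz; rewrite (parc_arc_gadget e o _ zG) => /orP[/and3P[hal /eqP hl /eqP hp]|/and3P[hb _ _]];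
  last by rewrite /= hb orbT.
rewrite /= /attached hal -hl -hp nodeK //.
by rewrite (pb_eq hP zP) hy !orbT.
Qed.

Lemma zone_of_pb_gadget x y : x \in G -> y \in pb x -> y \in zone.
Proof. exact: zone_of_part (pb_in x) (mem_pb x). Qed.

Lemma ham_line_block l : l <= m -> ham_path r (line_block l).
Proof.
move=> hl.
pose A := enum [pred a | attached a && (e a == l)].
have line_path k n : k + n <= m ->
    path r (node o u l k) [seq node o u l j | j <- iota k.+1 n].
  elim: n k => [|n IH] k hk //=.
  by rewrite parc_node_pos ?IH //; lia.
have mem_line_nodes x :
    (x \in [seq node o u l j | j <- iota 0 m.+1]) = (x \in G) && (lcoord o x == l).
  apply/mapP/andP => [[j]|[hx /eqP hxl]].
    by rewrite mem_iota => /andP[_ hj] ->; rewrite node_gadget lcoord_node.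
  by exists (pcoord o x); rewrite ?mem_iota ?ltnS ?pcoord_le // -hxl nodeK.
exists ([seq inr a | a <- A] ++ [seq node o u l j | j <- iota 0 m.+1]); split.
- rewrite cat_uniq; apply/and3P; split.
  + by rewrite map_inj_uniq ?enum_uniq // => a b [].
  + apply/hasPn=> x; rewrite mem_line_nodes => /andP[hx _].
    by apply/mapP=> -[a _ ex]; move: hx; rewrite ex inE.
  + rewrite map_inj_in_uniq ?iota_uniq // => j k; rewrite !mem_iota /= !ltnS => hj hk.
    by case/(node_inj hl hj hl hk).
- move=> x; rewrite mem_cat mem_line_nodes [x \in line_block l]inE orbC; congr (_ || _).
  case: x => [p|a]; first by apply/mapP=> -[b _].
  by rewrite mem_map ?mem_enum // => b c [].
- have hrow : path r (node o u l 0) [seq node o u l j | j <- iota 1 m] by apply: line_path.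
  (* at most one attached arc carries the label [l], since [e] is injective *)
  case hA: A => [|a [|b A']] //=; rewrite ?hrow ?andbT.
  + have : a \in A by rewrite hA inE eqxx.
    rewrite mem_enum inE => /andP[/andP[hal _] /eqP ha].
    change (r (inr a) (node o u l 0)).
    by rewrite (parc_arc_gadget e o _ node_gadget) lcoord_node // pcoord_node // hal ha !eqxx.
  + have : uniq A by rewrite enum_uniq.
    have : a \in A /\ b \in A by rewrite hA !inE !eqxx orbT.
    rewrite !mem_enum !inE => -[/andP[_ /eqP ea] /andP[_ /eqP eb]].
    by rewrite hA /= inE (e_inj (etrans ea (esym eb))) eqxx.
Qed.

Lemma ham_outside x : x \notin zone -> ham_path r (pb x :\: zone).
Proof.
move=> xZ.
have noG y : y \in pb x -> y \notin G.
  by move=> hy; apply: contra xZ => yG; rewrite (zone_of_part (pb_in x) hy yG (mem_pb x)).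
have [[|x0 s] [us ms ss]] := ham_pi (pb_in x); first by have := mem_pb x; rewrite -ms.
(* Only the head of the old path can lie in [zone]. *)
have sZ y : y \in s -> y \notin zone.
  move=> ys; have /allP/(_ y ys) := path_isgv ss.
  have yP : y \in pb x by rewrite -ms inE ys orbT.
  by rewrite inE (negbTE (noG _ yP)); case: y {ys yP}.
have [x0Z|x0Z] := boolP (x0 \in zone).
  exists s; split; [by case/andP: us| |exact: path_sorted ss].
  move=> y; rewrite in_setD -ms in_cons; apply/idP/idP => [ys|].
    by rewrite sZ // ys orbT.
  by case/andP=> yZ /orP[/eqP ey|//]; move: yZ; rewrite ey x0Z.
exists (x0 :: s); split => // y; rewrite in_setD -ms.
apply/idP/andP => [ys|[]//]; split=> //.
by move: ys; rewrite in_cons => /orP[/eqP->|/sZ].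
Qed.

Lemma ham_block x : ham_path r (block x).
Proof.
case: (zoneP x) => [hG|hb|ha|xZ].
- by rewrite (block_gadget hG); apply/ham_line_block/lcoord_le.
- by rewrite (block_misaligned hb); exists [:: x]; split => // y; rewrite !inE.
- by rewrite (block_attached ha); apply: ham_line_block; case: x {ha}.
- by rewrite (block_outside xZ); apply: ham_outside.
Qed.

(* Misaligned arcs come first; then, by increasing depth of the old part,
   outside vertices (offset 1) and line [l] (offset [l + 1 <= m + 1]). *)
Definition line_rank l := depth (pb (node o u l 0)) * m.+2 + l.+1.

Definition rank x :=
  if x \in G then line_rank (lcoord o x) else if is_misaligned x then 0
  else if is_attached x then line_rank (arc_label x) else depth (pb x) * m.+2 + 1.

Lemma rank_gadget x : x \in G -> rank x = line_rank (lcoord o x).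
Proof. by rewrite /rank => ->. Qed.

Lemma rank_attached x : is_attached x -> rank x = line_rank (arc_label x).
Proof.
move=> ha; rewrite /rank (negbTE (attached_not_gadget ha)).
by rewrite (negbTE (attached_not_misaligned ha)) ha.
Qed.

Lemma rank_outside x : x \notin zone -> rank x = depth (pb x) * m.+2 + 1.
Proof.
rewrite inE /rank; case: (x \in G) => //=.
by case: (is_misaligned x) => //=; case: (is_attached x).
Qed.

Lemma rank_line_block l y : y \in line_block l -> rank y = line_rank l.
Proof.
rewrite inE => /orP[/andP[hy /eqP<-]|/andP[ha /eqP<-]].
  exact: rank_gadget.
exact: rank_attached.
Qed.

Lemma rank_block x y : y \in block x -> rank y = rank x.
Proof.
case: (zoneP x) => [hG|hb|ha|xZ].
- by rewrite (block_gadget hG) (rank_gadget hG); apply: rank_line_block.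
- by rewrite (block_misaligned hb) => /set1P->.
- by rewrite (block_attached ha) (rank_attached ha); apply: rank_line_block.
rewrite (block_outside xZ) inE => /andP[yZ yP].
by rewrite (rank_outside yZ) (rank_outside xZ) (pb_same yP).
Qed.

Lemma outside_gv y : isgv y -> y \notin G -> y \notin zone.
Proof. by rewrite [y \in zone]inE => yl /negbTE->; case: y yl. Qed.

Lemma rank_gv_pos y : isgv y -> 0 < rank y.
Proof.
move=> yl; have [yG|yG] := boolP (y \in G); first by rewrite rank_gadget // /line_rank addnS.
by rewrite rank_outside ?outside_gv // addn1.
Qed.

Lemma rank_lt_gadget x y : x \in G -> r x y -> block x != block y -> rank x < rank y.
Proof.
move=> hG hxy; have yG := parc_gadget_closed hG hxy.
rewrite (block_gadget hG) (block_gadget yG) (rank_gadget hG) (rank_gadget yG).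
move: hxy; rewrite (parc_gadget e o _ hG) yG => /orP[/andP[/eqP-> _]|]; first by rewrite eqxx.
case/andP=> /eqP hl /eqP hp _; rewrite /line_rank hl.
have step : depth (pb (node o u (lcoord o x) 0)) <= depth (pb (node o u (lcoord o x).+1 0)).
  by apply/depth_pb_le/parc_node_line => //; rewrite -hl lcoord_le.
nia.
Qed.

Lemma rank_lt_attached x y : is_attached x -> r x y -> block x != block y ->
  rank x < rank y.
Proof.
case: x => // a ha hxy; rewrite (block_attached ha) (rank_attached ha) /=.
have yl := parc_isgv hxy.
have [yG|yG] := boolP (y \in G).
  move: hxy; rewrite (parc_arc_gadget e o _ yG) => /orP[/and3P[_ /eqP hl _]|/and3P[hb _ _]].
    by rewrite (block_gadget yG) hl eqxx.
  by move: (attached_not_misaligned ha); rewrite /= hb.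
have yZ := outside_gv yl yG; rewrite (rank_outside yZ) => _.
have hx : inr a \in pb (node o u (e a) 0) by case/andP: ha.
have : depth (pb (inr a)) < depth (pb y).
  apply: depth_pb_lt hxy _; apply: contra yZ => /eqP epb.
  apply: (zone_of_pb_gadget (@node_gadget _ _ o u (e a) 0)).
  by rewrite -(pb_same hx) epb mem_pb.
rewrite /line_rank (pb_same hx); have := e_le a; nia.
Qed.

Lemma rank_lt_outside x y : x \notin zone -> r x y -> block x != block y ->
  rank x < rank y.
Proof.
move=> xZ hxy; rewrite (block_outside xZ) (rank_outside xZ).
have yl := parc_isgv hxy.
have [yG|yG] := boolP (y \in G); last first.
  have yZ := outside_gv yl yG; rewrite (block_outside yZ) (rank_outside yZ) => nb.
  suff : depth (pb x) < depth (pb y) by nia.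
  by apply: depth_pb_lt hxy _; apply: contraNneq nb => ->.
case: x xZ hxy => [[[w i] j]|a] xZ hxy _.
  have xw : inl (w, i, j) \in gadget E w by rewrite inE.
  have wu := gadget_uniq (parc_gadget_closed xw hxy) yG.
  by move: xZ; rewrite [_ \in zone]inE -wu xw.
move: (hxy); rewrite (parc_arc_gadget e o _ yG) => /orP[/and3P[hal /eqP hl /eqP hp]|/and3P[hb _ _]];
  last by move: xZ; rewrite inE /= hb orbT.
have ey : node o u (e a) 0 = y by rewrite -hl -hp nodeK.
have : depth (pb (inr a)) < depth (pb y).
  apply: depth_pb_lt hxy _; apply: contra xZ => /eqP epb.
  by rewrite [_ \in zone]inE /= /attached hal ey -epb mem_pb !orbT.
by rewrite (rank_gadget yG) /line_rank hl ey; nia.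
Qed.

Lemma rank_lt x y : r x y -> block x != block y -> rank x < rank y.
Proof.
case: (zoneP x) => [hG|hb|ha|xZ] hxy.
- exact: rank_lt_gadget.
- have -> : rank x = 0 by case: x hb {hxy} => // a; rewrite /rank inE => ->.
  by move=> _; apply/rank_gv_pos/(parc_isgv hxy).
- exact: rank_lt_attached.
- exact: rank_lt_outside.
Qed.

Definition realign := [set block x | x : T].

Lemma partition_realign : partition realign [set: T].
Proof. exact: partition_imset_block mem_block block_same. Qed.

Lemma pblock_realign y : pblock realign y = block y.
Proof.
apply: def_pblock (partition_trivIset partition_realign) _ (mem_block y).
by apply/imsetP; exists y.
Qed.

Lemma Hstar_realign : Hstar_partition r realign.
Proof.
split; [exact: partition_realign|by move=> B /imsetP[x _ ->]; exact: ham_block|].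
pose rankB (B : {set T}) := if [pick z in B] is Some z then rank z else 0.
have rankB_block x : rankB (block x) = rank x.
  rewrite /rankB; case: pickP => [z|/(_ x)]; first exact: rank_block.
  by rewrite mem_block.
apply: (acyclic_of_rank (rk := rankB)) => P Q /and4P[hP hQ nPQ].
case/existsP=> x /andP[xP /existsP[y /andP[yQ hxy]]].
rewrite (mem_imset_block block_same hP xP) (mem_imset_block block_same hQ yQ) in nPQ *.
by rewrite !rankB_block; apply: rank_lt.
Qed.

Lemma well_oriented_realign : well_oriented realign u.
Proof.
apply: (well_oriented_of_lcoord (o := o) partition_realign) => y z hy hz.
have /negbTE za := contraL (@attached_not_gadget z) hz.
by rewrite pblock_realign (block_gadget hy) [z \in _]inE hz za orbF.
Qed.

Lemma restr_realign_other w : w != u ->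
  restr realign (gadget E w) = restr pi (gadget E w).
Proof.
move=> wu; rewrite (restr_pblock _ partition_realign) (restr_pblock _ partition_pi).
have outside z : z \in gadget E w -> z \notin zone.
  move=> hz; apply: outside_gv; first by case: z hz => // a; rewrite inE.
  by apply: contra wu => /(gadget_uniq hz) ->.
apply: eq_in_imset => y hy; rewrite pblock_realign (block_outside (outside _ hy)).
apply/setP => z; rewrite !in_setI in_setD.
by case: (boolP (z \in gadget E w)) => hz; rewrite ?andbF ?andbT ?outside.
Qed.

Lemma card_realign : #|[set a : edgeT E | aligned (~~ o) u a]| <= 1 -> m.+2 <= #|gparts| ->
  #|realign| <= #|pi|.
Proof.
move=> hbad hG.
pose S := [set P : {set T} | P \subset zone].
have sub : realign \subset [set P :\: zone | P in pi :\: S] :|: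
    [set line_block i | i : 'I_m.+1] :|: [set [set inr a] | a in [set a : edgeT E | aligned (~~ o) u a]].
  apply/subsetP=> B /imsetP[x _ ->]; rewrite !inE.
  case: (zoneP x) => [hG'|hb|ha|xZ].
  - rewrite (block_gadget hG'); apply/orP; left; apply/orP; right; apply/imsetP.
    by exists (inord (lcoord o x)); rewrite ?inordK ?ltnS ?lcoord_le.
  - rewrite (block_misaligned hb); apply/orP; right; apply/imsetP.
    by case: x hb => // a hb; exists a; rewrite ?inE.
  - rewrite (block_attached ha); apply/orP; left; apply/orP; right; apply/imsetP.
    by case: x ha => // a _; exists (inord (e a)); rewrite ?inordK ?ltnS ?e_le.
  - rewrite (block_outside xZ); apply/orP; left; apply/orP; left; apply/imsetP.
    exists (pb x) => //; rewrite !inE pb_in andbT.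
    by apply: contra xZ => /subsetP; apply; rewrite mem_pb.
have gparts_S : m.+2 <= #|pi :&: S|.
  apply: (leq_trans hG); apply: subset_leq_card; apply/subsetP=> P.
  rewrite !inE => /andP[hP /set0Pn[g]]; rewrite inE => /andP[gP gG].
  by rewrite hP; apply/subsetP => y; apply: zone_of_part hP gP gG.
have cU (X Y : {set {set T}}) : #|X :|: Y| <= #|X| + #|Y| := (leq_card_setU X Y).1.
have cA := leq_imset_card (fun P => P :\: zone) (pi :\: S).
have cB : #|[set line_block i | i : 'I_m.+1]| <= m.+1.
  by apply: leq_trans (leq_imset_card _ _) _; rewrite card_ord.
have cC := leq_trans (leq_imset_card (fun a => [set (inr a : T)]) _) hbad.
have := leq_trans (subset_leq_card sub) (leq_trans (cU _ _) (leq_add (cU _ _) (leqnn _))).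
move/leq_trans; apply; rewrite -(cardsID S pi) [X in _ <= X]addnC -addnA.
by apply: leq_add cA (leq_trans (leq_add cB cC) _); rewrite addn1.
Qed.

End Realign.

Lemma card_in_arcs (V : finType) (E : rel V) v :
  #|[set a : edgeT E | (val a).2 == v]| = #|[set w | E w v]|.
Proof.
have tail_inj : {in [set a : edgeT E | (val a).2 == v] &, injective (fun a => (val a).1)}.
  move=> a b; rewrite !inE => /eqP ha /eqP hb hab; apply: val_inj.
  by rewrite [val a]surjective_pairing [val b]surjective_pairing hab ha hb.
rewrite -(card_in_imset tail_inj); apply: eq_card => w; rewrite [in RHS]inE.
apply/imsetP/idP => [[a] /[!inE] /eqP <- ->|hw]; first exact: valP a.
by exists (exist _ (w, v) hw); rewrite ?inE.
Qed.

Lemma card_out_arcs (V : finType) (E : rel V) v :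
  #|[set a : edgeT E | (val a).1 == v]| = #|[set w | E v w]|.
Proof.
have head_inj : {in [set a : edgeT E | (val a).1 == v] &, injective (fun a => (val a).2)}.
  move=> a b; rewrite !inE => /eqP ha /eqP hb hab; apply: val_inj.
  by rewrite [val a]surjective_pairing [val b]surjective_pairing hab ha hb.
rewrite -(card_in_imset head_inj); apply: eq_card => w; rewrite [in RHS]inE.
apply/imsetP/idP => [[a] /[!inE] /eqP <- ->|hw]; first exact: valP a.
by exists (exist _ (v, w) hw); rewrite ?inE.
Qed.

Theorem lemma5p8 (V : finType) (E : rel V) (e : edgeT E -> nat)
  (HV : 0 < #|V|)
  (Hloop : forall v, ~~ E v v)
  (Hdeg : forall v, #|[set w | E w v]| = 1 \/ #|[set w | E v w]| = 1)
  (He_inj : injective e)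
  (He_range : forall a, 1 <= e a <= nedges E)
  (He_surj : forall k, 1 <= k <= nedges E -> exists a, e a = k)
  (u : V) (pi : {set {set PV E}})
  (Hpi : Hstar_partition (parc e) pi)
  (Hu : ~~ well_oriented pi u) :
  exists pi' : {set {set PV E}},
    [/\ Hstar_partition (parc e) pi',
        #|pi'| <= #|pi|,
        well_oriented pi' u
      & forall w, w != u -> (well_oriented pi w <-> well_oriented pi' w)].
Proof.
have e_le a : e a <= nedges E by case/andP: (He_range a).
pose o := #|[set w | E w u]| == 1.
have misaligned_le1 : #|[set a : edgeT E | aligned (~~ o) u a]| <= 1.
  rewrite /o; have [hin|hin] /= := eqVneq #|[set w | E w u]| 1.
    by rewrite card_in_arcs hin.
  by rewrite card_out_arcs; case: (Hdeg u) hin => -> //; rewrite eqxx.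
have gparts_gt : (nedges E).+2 <= #|gparts pi u|.
  by rewrite ltnNge; apply/negP => /(well_oriented_of_card_gparts Hpi) wo; rewrite wo in Hu.
exists (realign e pi u o); split.
- exact: Hstar_realign.
- exact: card_realign.
- exact: well_oriented_realign.
- by move=> w wu; rewrite /well_oriented restr_realign_other.
Qed.
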